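(* Let $N,M\ge1$, $\mathcal H_+=\mathbb C^N$, $\mathcal H_-=\mathbb C^M$, $\mathcal H=\mathcal H_+\oplus\mathcal H_-$. Fix $b>0$ and $d_1,\dots,d_M\in i\mathbb R$, and put $B=\mathrm{diag}(b,0,\dots,0)$ ($N\times N$) and $D=\mathrm{diag}(d_1,\dots,d_M)$. Consider rank one partial isometries $u:\mathcal H_+\to\mathcal H_-$ of the form: first column $(\alpha_1,\dots,\alpha_M)^T$ with $\sum_j|\alpha_j|^2=1$, all other columns zero, and set $\mu=\begin{pmatrix}0&-Bu^*\\ uB&D\end{pmatrix}$. Consider the system of equations $$\frac{\partial}{\partial t^n_k}u=i^{n+1}\big(\mu H^{n-1}_{k-1}(\mu)\big)_{--}\,u,\qquad n\ge1,\ 1\le k\le n/2+1 .$$ Let $p^n_{j,k}$ be the real-coefficient polynomials such that, for every such $u$, the $j$-th entry of the first column of the right-hand side equals $i\,p^n_{j,k}(|\alpha_1|^2,\dots,|\alpha_M|^2)\alpha_j$ (all other columns of the right-hand side being zero). Then for any initial values $\alpha^0_1,\dots,\alpha^0_M\in\mathbb C$ with $\sum_j|\alpha^0_j|^2=1$, the solution of this system with $\alpha_j=\alpha_j^0$ at all times zero is $$\alpha_j(t^1_1,t^2_1,t^2_2,\dots)=\alpha_j^0\exp\Big(i\sum_{n,\ k\le n/2+1}p^n_{j,k}\big(|\alpha^0_1|^2,\dots,|\alpha^0_M|^2\big)\,t^n_k\Big),\qquad j=1,\dots,M.$$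
   Context: $P_+$ and $P_-$ denote the orthogonal projectors of $\mathcal H$ onto $\mathcal H_+$ and $\mathcal H_-$; for an operator $X$ on $\mathcal H$, $X_{--}$ denotes the block $P_-XP_-$ regarded as an operator on $\mathcal H_-$. For integers $m\ge 0$ and $0\le l\le m+1$ and a matrix $\mu$ on $\mathcal H$, define $$H^m_l(\mu)=\sum_{\substack{i_0,\dots,i_m\in\{0,1\}\\ i_0+\dots+i_m=l}} P_+^{i_0}\mu P_+^{i_1}\mu\cdots\mu P_+^{i_m},$$ with $P_+^0=I$ the identity and $P_+^1=P_+$. The times $t^n_k$ are independent real variables (with only finitely many nonzero in the sum). The polynomials $p^n_{j,k}$ (whose existence, with real coefficients depending on $b,d_1,\dots,d_M$, is part of the setup) are those for which the equations read $\frac{\partial}{\partial t^n_k}\alpha_j=i\,p^n_{j,k}(|\alpha_1|^2,\dots,|\alpha_M|^2)\alpha_j$. *)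

From HB Require Import structures.
From mathcomp Require Import all_boot all_order all_algebra.
From mathcomp Require Import complex.
From mathcomp Require Import all_classical all_reals all_analysis.
From mathcomp Require mpoly.

Set Implicit Arguments.
Unset Strict Implicit.
Unset Printing Implicit Defensive.
Import Order.TTheory GRing.Theory Num.Theory.
Local Open Scope ring_scope.

Section Defs.
Variable R : realType.
Local Notation C := (complex R).

Definition ii : C := Complex 0 1.
Definition Cr (x : R) : C := Complex x 0.
Definition nsq (z : C) : R := complex.Re z ^+ 2 + complex.Im z ^+ 2.
Definition cexpi (th : R) : C := Complex (cos th) (sin th).

Definition adjmx m n (A : 'M[C]_(m, n)) : 'M[C]_(n, m) :=
  \matrix_(i, j) conjc (A j i).

Variables N M : nat.

(* P_+ on H = H_+ (+) H_-, H_+ = C^N, H_- = C^M *)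
Definition Pplus : 'M[C]_(N + M) := block_mx 1%:M 0 0 0.
Definition Ppow (e : bool) : 'M[C]_(N + M) := if e then Pplus else 1%:M.

(* H^m_l(mu) = sum over (i_0..i_m) in {0,1}^(m+1) with sum l of
   P_+^{i_0} mu P_+^{i_1} mu ... mu P_+^{i_m} *)
Definition Hml (m l : nat) (mu : 'M[C]_(N + M)) : 'M[C]_(N + M) :=
  \sum_(s : (m.+1).-tuple bool | (\sum_(r < m.+1) (tnth s r : nat))%N == l)
    (Ppow (tnth s ord0) *m
       \big[mulmx/1%:M]_(r < m) (mu *m Ppow (tnth s (lift ord0 r)))).

Definition Bmat (b : R) : 'M[C]_N :=
  \matrix_(i, j) if ((i : nat) == 0%N) && ((j : nat) == 0%N) then Cr b else 0.
Definition Dmat (d : 'I_M -> C) : 'M[C]_M := diag_mx (\row_j d j).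

Definition umat (alpha : 'I_M -> C) : 'M[C]_(M, N) :=
  \matrix_(j, c) if (c : nat) == 0%N then alpha j else 0.

Definition mumat (b : R) (d : 'I_M -> C) (u : 'M[C]_(M, N)) : 'M[C]_(N + M) :=
  block_mx 0 (- (Bmat b *m adjmx u)) (u *m Bmat b) (Dmat d).

Definition rhs (b : R) (d : 'I_M -> C) (n k : nat) (u : 'M[C]_(M, N))
  : 'M[C]_(M, N) :=
  let mu := mumat b d u in
  (ii ^+ n.+1) *: drsubmx (mu *m Hml (n - 1) (k - 1) mu) *m u.

Definition admk (n k : nat) : bool := (1 <= n)%N && (1 <= k <= (n./2).+1)%N.

Definition tadm (L : nat) (t : nat -> nat -> R) : Prop :=
  forall n k, ~~ (admk n k && (n <= L)%N) -> t n k = 0.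

Definition tupd (t : nat -> nat -> R) (n k : nat) (s : R) : nat -> nat -> R :=
  fun n' k' => if (n' == n) && (k' == k) then t n' k' + s else t n' k'.

Definition cderiv (f : R -> C) (x : R) (z : C) : Prop :=
  is_derive x 1 (fun s => complex.Re (f s)) (complex.Re z) /\
  is_derive x 1 (fun s => complex.Im (f s)) (complex.Im z).

Definition solves (b : R) (d : 'I_M -> C) (L : nat)
  (alpha : (nat -> nat -> R) -> 'I_M -> C) : Prop :=
  forall t, tadm L t -> forall n k, admk n k -> (n <= L)%N ->
    forall (j : 'I_M) (c : 'I_N),
      cderiv (fun s => umat (alpha (tupd t n k s)) j c) 0
             (rhs b d n k (umat (alpha t)) j c).

Definition solformula (p : nat -> nat -> 'I_M -> mpoly.mpoly M R)
  (alpha0 : 'I_M -> C) (L : nat) (t : nat -> nat -> R) (j : 'I_M) : C :=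
  alpha0 j * cexpi (\sum_(1 <= n < L.+1) \sum_(1 <= k < (n./2).+2)
      mpoly.meval (fun i => nsq (alpha0 i)) (p n k j) * t n k).

End Defs.
Arguments ii {R}.

From HB Require Import structures.
From mathcomp Require Import all_boot all_order all_algebra.
From mathcomp Require Import complex.
From mathcomp Require Import all_classical all_reals all_analysis.
From mathcomp Require mpoly.
From mathcomp Require Import ring zify.

Set Implicit Arguments.
Unset Strict Implicit.
Unset Printing Implicit Defensive.
Import Order.TTheory GRing.Theory Num.Theory.
Local Open Scope ring_scope.

(* For u of the given shape every flow acts diagonally, alpha_j' = i P alpha_j
   with P real: it rotates each alpha_j and so preserves every |alpha_j|^2.
   The rate P, a polynomial in the |alpha_i|^2, is therefore constant along
   the flow, which is hence the rotation alpha_j |-> alpha_j exp(i P s).  The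
   same argument applies to any normalized solution along each coordinate line
   of the times, and every admissible time is reached from 0 by finitely many
   coordinate moves.  Only this diagonal form of the right-hand side (the
   hypothesis defining the p^n_k) is used; b, D and the block structure of mu
   play no further role. *)

Section ComplexRotation.
Variable R : realType.
Local Notation C := (complex R).

Lemma Re_mulc (z w : C) :
  complex.Re (z * w) = complex.Re z * complex.Re w - complex.Im z * complex.Im w.
Proof. by case: z; case: w. Qed.

Lemma Im_mulc (z w : C) :
  complex.Im (z * w) = complex.Re z * complex.Im w + complex.Im z * complex.Re w.
Proof. by case: z; case: w. Qed.

Lemma Re_iCr_mul (x : R) (z : C) : complex.Re (ii * Cr x * z) = - (x * complex.Im z).
Proof. by rewrite Re_mulc Im_mulc /=; ring. Qed.

Lemma Im_iCr_mul (x : R) (z : C) : complex.Im (ii * Cr x * z) = x * complex.Re z.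
Proof. by rewrite Im_mulc Re_mulc /=; ring. Qed.

Lemma eq_complex (z w : C) :
  complex.Re z = complex.Re w -> complex.Im z = complex.Im w -> z = w.
Proof. by case: z; case: w => ? ? ? ? /= -> ->. Qed.

Lemma cexpi0 : cexpi (0 : R) = 1.
Proof. by rewrite /cexpi cos0 sin0. Qed.

Lemma cexpiD (x y : R) : cexpi (x + y) = cexpi x * cexpi y.
Proof. by apply: eq_complex; rewrite ?Re_mulc ?Im_mulc /= ?cosD ?sinD; ring. Qed.

Lemma nsq_mul_cexpi (z : C) (x : R) : nsq (z * cexpi x) = nsq z.
Proof.
have := cos2Dsin2 x; rewrite /nsq Re_mulc Im_mulc /= => unit_circle.
by rewrite -[RHS]mulr1 -unit_circle; ring.
Qed.

Lemma cderiv_shift (f : R -> C) (x : R) (z : C) :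
  cderiv (fun s => f (x + s)) 0 z -> cderiv f x z.
Proof.
have shift (F : R -> R) (v : R) :
    is_derive (0 : R) (1 : R) (fun s => F (x + s)) v -> is_derive x (1 : R) F v.
  move=> dF; have -> : F = (fun s => F (x + s)) \o (fun y => y - x).
    by apply: funext => y /=; rewrite addrC subrK.
  apply: is_derive_eq; first by apply: is_derive1_comp; rewrite subrr; exact: dF.
  by rewrite subr0 mulr1.
by case=> dRe dIm; split; apply: shift.
Qed.

Lemma cderiv_cst (z : C) (x : R) : cderiv (fun _ => z) x 0.
Proof. by split; apply: is_derive_cst. Qed.

Definition rotates (g : R -> C) (P : R -> R) : Prop :=
  forall s, cderiv g s (ii * Cr (P s) * g s).

Lemma rotates_mul_cexpi (z : C) (P : R) : rotates (fun s => z * cexpi (P * s)) (fun _ => P).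
Proof.
move=> x; split.
- rewrite Re_iCr_mul Im_mulc; under eq_fun do rewrite Re_mulc /=.
  by apply: trigger_derive; rewrite /GRing.scale /=; ring.
- rewrite Im_iCr_mul Re_mulc; under eq_fun do rewrite Im_mulc /=.
  by apply: trigger_derive; rewrite /GRing.scale /=; ring.
Qed.

Lemma rotates_nsq_const (g : R -> C) (P : R -> R) :
  rotates g P -> forall s, nsq (g s) = nsq (g 0).
Proof.
move=> rot s; rewrite /nsq.
apply: (is_derive_0_is_cst (f := fun x => complex.Re (g x) ^+ 2 + complex.Im (g x) ^+ 2)) => x.
have [dRe dIm] := rot x; rewrite Re_iCr_mul in dRe; rewrite Im_iCr_mul in dIm.
by apply: trigger_derive; rewrite /GRing.scale /=; ring.
Qed.

Lemma rotates_cst_rate (g : R -> C) (P : R) :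
  rotates g (fun _ => P) -> forall s, g s = g 0 * cexpi (P * s).
Proof.
move=> rot s.
have unrotated : g s * cexpi (- (P * s)) = g 0 * cexpi (- (P * 0)).
  apply: eq_complex; rewrite !(Re_mulc, Im_mulc) /=.
  - apply: (is_derive_0_is_cst (f := fun x =>
      complex.Re (g x) * cos (- (P * x)) - complex.Im (g x) * sin (- (P * x)))) => x.
    have [dRe dIm] := rot x; rewrite Re_iCr_mul in dRe; rewrite Im_iCr_mul in dIm.
    by apply: trigger_derive; rewrite /GRing.scale /=; ring.
  - apply: (is_derive_0_is_cst (f := fun x =>
      complex.Re (g x) * sin (- (P * x)) + complex.Im (g x) * cos (- (P * x)))) => x.
    have [dRe dIm] := rot x; rewrite Re_iCr_mul in dRe; rewrite Im_iCr_mul in dIm.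
    by apply: trigger_derive; rewrite /GRing.scale /=; ring.
rewrite mulr0 oppr0 cexpi0 mulr1 in unrotated.
by rewrite -unrotated -mulrA -cexpiD addNr cexpi0 mulr1.
Qed.

End ComplexRotation.

Section AdmissibleTimes.
Variable R : realType.
Implicit Types (t : nat -> nat -> R) (L n k : nat) (s : R).

Lemma tupd0 t n k : tupd t n k 0 = t.
Proof.
by apply: funext => n'; apply: funext => k'; rewrite /tupd; case: ifP; rewrite ?addr0.
Qed.

Lemma tupd_tupd t n k s s' : tupd (tupd t n k s) n k s' = tupd t n k (s + s').
Proof.
apply: funext => n'; apply: funext => k'; rewrite /tupd.
by case: ifP => nk; rewrite ?nk ?addrA.
Qed.

Lemma tadm_tupd L t n k s : tadm L t -> admk n k -> (n <= L)%N -> tadm L (tupd t n k s).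
Proof.
move=> ht hnk hnL n' k'; rewrite /tupd; case: ifP => [/andP[/eqP-> /eqP->]|_].
  by rewrite hnk hnL.
exact: ht.
Qed.

Lemma tadm_ind L (Q : (nat -> nat -> R) -> Prop) :
  Q (fun _ _ => 0) ->
  (forall t n k s, tadm L t -> admk n k -> (n <= L)%N -> Q t -> Q (tupd t n k s)) ->
  forall t, tadm L t -> Q t.
Proof.
move=> Q0 Qtupd.
suff on_support (S : seq (nat * nat)) t :
    tadm L t -> (forall n k, t n k != 0 -> (n, k) \in S) -> Q t.
  move=> t ht; apply: (on_support [seq (n, k) | n <- iota 0 L.+1, k <- iota 0 L.+2]) => // n k.
  case hnk: (admk n k && (n <= L)%N); last by rewrite ht ?hnk ?eqxx.
  move: hnk => /andP[/andP[_ /andP[_ hk]] hnL] _.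
  have half_le : (n./2 <= n)%N by rewrite leq_half_double; lia.
  by apply: allpairs_f; rewrite !mem_iota /=; lia.
elim: S t => [|[a c] S IHS] t ht supp.
  suff -> : t = (fun _ _ => 0) by [].
  by apply: funext => n; apply: funext => k; apply/eqP; apply: contraT => /supp.
have supp_off (t' : nat -> nat -> R) : t' a c = 0 -> (forall n k, t' n k != 0 -> t n k != 0) ->
    forall n k, t' n k != 0 -> (n, k) \in S.
  move=> t'ac t't n k t'nk; have := supp n k (t't n k t'nk).
  by rewrite in_cons => /orP[/eqP[en ek]|//]; move: t'nk; rewrite en ek t'ac eqxx.
case adm: (admk a c && (a <= L)%N); last first.
  by apply: IHS => //; apply: supp_off => //; apply/eqP; rewrite ht ?adm.
move: adm => /andP[hac haL].
set t' := tupd t a c (- t a c).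
have ht' : tadm L t' by exact: tadm_tupd.
have -> : t = tupd t' a c (t a c) by rewrite tupd_tupd addNr tupd0.
apply: Qtupd => //; apply: IHS => //.
apply: supp_off => [|n k]; first by rewrite /t' /tupd !eqxx addrN.
by rewrite /t' /tupd; case: ifP => // /andP[/eqP-> /eqP->]; rewrite addrN eqxx.
Qed.

Definition phase (c : nat -> nat -> R) (L : nat) (t : nat -> nat -> R) : R :=
  \sum_(1 <= n < L.+1) \sum_(1 <= k < (n./2).+2) c n k * t n k.

Lemma phase0 c L : phase c L (fun _ _ => 0) = 0.
Proof. by rewrite /phase big1 // => n _; rewrite big1 // => k _; rewrite mulr0. Qed.

Lemma phase_tupd c L t n k s : admk n k -> (n <= L)%N ->
  phase c L (tupd t n k s) = phase c L t + c n k * s.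
Proof.
move=> /andP[n_gt0 /andP[k_gt0 k_le]] hnL; rewrite /phase.
have split_term n' k' : c n' k' * tupd t n k s n' k' =
    c n' k' * t n' k' + (if (n' == n) && (k' == k) then c n' k' * s else 0).
  by rewrite /tupd; case: ifP; rewrite ?addr0 ?mulrDr.
under eq_bigr => n' _ do under eq_bigr => k' _ do rewrite split_term.
under eq_bigr => n' _ do rewrite big_split /=.
rewrite big_split /=; congr (_ + _).
rewrite (bigD1_seq n) ?mem_index_iota ?iota_uniq ?n_gt0 ?ltnS //=.
rewrite (bigD1_seq k) ?mem_index_iota ?iota_uniq ?k_gt0 ?ltnS //=.
rewrite !eqxx big1 => [|k' /negbTE->//]; rewrite big1 ?addr0 // => n' /negbTE nn'.
by rewrite big1 // => k' _; rewrite nn'.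
Qed.

End AdmissibleTimes.

Section PhaseFlows.
Variables (R : realType) (N M : nat) (b : R) (d : 'I_M -> complex R).
Variable p : nat -> nat -> 'I_M -> mpoly.mpoly M R.
Hypothesis N_gt0 : (0 < N)%N.

Local Notation C := (complex R).
Local Notation rate a n k j := (mpoly.meval (fun i => nsq (a i)) (p n k j)).

Hypothesis rhsE : forall n k, admk n k ->
  forall alpha : 'I_M -> C, \sum_j nsq (alpha j) = 1 ->
    forall (j : 'I_M) (c : 'I_N),
      rhs b d n k (umat N alpha) j c =
        if (c : nat) == 0%N then ii * Cr (rate alpha n k j) * alpha j else 0.

Variables (alpha0 : 'I_M -> C) (L : nat).
Hypothesis alpha0_normalized : \sum_j nsq (alpha0 j) = 1.

Local Notation sol := (solformula p alpha0 L).

Lemma solformulaE t j : sol t j = alpha0 j * cexpi (phase (fun n k => rate alpha0 n k j) L t).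
Proof. by []. Qed.

Lemma solformula0 j : sol (fun _ _ => 0) j = alpha0 j.
Proof. by rewrite solformulaE phase0 cexpi0 mulr1. Qed.

Lemma nsq_solformula t j : nsq (sol t j) = nsq (alpha0 j).
Proof. by rewrite solformulaE nsq_mul_cexpi. Qed.

Lemma solformula_normalized t : \sum_j nsq (sol t j) = 1.
Proof. by under eq_bigr do rewrite nsq_solformula. Qed.

Lemma rate_solformula t n k j : rate (sol t) n k j = rate alpha0 n k j.
Proof. by congr mpoly.meval; apply: funext => i; rewrite nsq_solformula. Qed.

Lemma solformula_tupd t n k s j : admk n k -> (n <= L)%N ->
  sol (tupd t n k s) j = sol t j * cexpi (rate alpha0 n k j * s).
Proof. by move=> hnk hnL; rewrite !solformulaE phase_tupd // cexpiD mulrA. Qed.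

Lemma solves_solformula : solves N b d L sol.
Proof.
move=> t ht n k hnk hnL j c; rewrite rhsE ?solformula_normalized // rate_solformula.
have -> : (fun s => umat N (sol (tupd t n k s)) j c) =
    fun s => if (c : nat) == 0%N then sol t j * cexpi (rate alpha0 n k j * s) else 0.
  by apply: funext => s; rewrite mxE solformula_tupd.
case: eqP => _; last exact: cderiv_cst.
by have := rotates_mul_cexpi (sol t j) (rate alpha0 n k j) 0; rewrite mulr0 cexpi0 mulr1.
Qed.

Section Uniqueness.
Variable f : (nat -> nat -> R) -> 'I_M -> C.
Hypothesis f_normalized : forall t, tadm L t -> \sum_j nsq (f t j) = 1.
Hypothesis f_solves : solves N b d L f.

Lemma solves_rotates t n k j : tadm L t -> admk n k -> (n <= L)%N ->
  rotates (fun s => f (tupd t n k s) j) (fun s => rate (f (tupd t n k s)) n k j).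
Proof.
move=> ht hnk hnL s0; have ht0 := tadm_tupd s0 ht hnk hnL.
have := f_solves ht0 hnk hnL j (Ordinal N_gt0); rewrite rhsE ?f_normalized //=.
have -> : (fun s => umat N (f (tupd (tupd t n k s0) n k s)) j (Ordinal N_gt0)) =
    fun s => f (tupd t n k (s0 + s)) j by apply: funext => s; rewrite mxE tupd_tupd.
exact: cderiv_shift.
Qed.

(* Along a coordinate line the moduli, hence the rate, are conserved. *)
Lemma solves_tupd t n k s j : tadm L t -> admk n k -> (n <= L)%N ->
  f (tupd t n k s) j = f t j * cexpi (rate (f t) n k j * s).
Proof.
move=> ht hnk hnL.
have nsq_line s' i : nsq (f (tupd t n k s') i) = nsq (f t i).
  by rewrite (rotates_nsq_const (solves_rotates i ht hnk hnL)) tupd0.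
have rot : rotates (fun s => f (tupd t n k s) j) (fun _ => rate (f t) n k j).
  move=> s'; have := solves_rotates j ht hnk hnL s'.
  by have -> : (fun i => nsq (f (tupd t n k s') i)) = fun i => nsq (f t i)
    by apply: funext => i; exact: nsq_line.
by rewrite (rotates_cst_rate rot) tupd0.
Qed.

Lemma solves_unique : (forall j, f (fun _ _ => 0) j = alpha0 j) ->
  forall t, tadm L t -> forall j, f t j = sol t j.
Proof.
move=> f0; apply: tadm_ind => [j|t n k s ht hnk hnL ft j]; first by rewrite f0 solformula0.
by rewrite solves_tupd // solformula_tupd // (funext ft) rate_solformula.
Qed.

End Uniqueness.
End PhaseFlows.

Theorem theorem4p2 (R : realType) (N M : nat) (hN : (0 < N)%N) (hM : (0 < M)%N)
  (b : R) (hb : 0 < b) (d : 'I_M -> complex R)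
  (hd : forall j, complex.Re (d j) = 0)
  (p : nat -> nat -> 'I_M -> mpoly.mpoly M R)
  (hp : forall n k, admk n k ->
     forall alpha : 'I_M -> complex R, \sum_j nsq (alpha j) = 1 ->
       forall (j : 'I_M) (c : 'I_N),
         rhs b d n k (umat N alpha) j c =
           if (c : nat) == 0%N then
             ii * Cr (mpoly.meval (fun i => nsq (alpha i)) (p n k j)) * alpha j
           else 0)
  (alpha0 : 'I_M -> complex R) (h0 : \sum_j nsq (alpha0 j) = 1)
  (L : nat) :
  let sol := solformula p alpha0 L in
  (forall j, sol (fun _ _ => 0) j = alpha0 j) /\
  (forall t, tadm L t -> \sum_j nsq (sol t j) = 1) /\
  solves N b d L sol /\
  (forall f : (nat -> nat -> R) -> 'I_M -> complex R,
     (forall t, tadm L t -> \sum_j nsq (f t j) = 1) ->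
     (forall j, f (fun _ _ => 0) j = alpha0 j) ->
     solves N b d L f ->
     forall t, tadm L t -> forall j, f t j = sol t j).
Proof.
split; first exact: solformula0.
split; first by move=> t _; exact: solformula_normalized.
split; first exact: solves_solformula.
by move=> f f_normalized f0 f_solves; exact: solves_unique f_normalized f_solves f0.
Qed.
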